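(* For every cap-cup cycle $c$ with $T(c) = \pm 2$, there exists a knot diagram $f \in \mathbb{CC}$ whose string diagram has no crossings (braidings) and such that $\mathrm{ccc}(f) = c$.
   Context: $\mathbb{CC}$ is the free (strict) braided monoidal category generated by objects $\uparrow, \downarrow$ and four generating morphisms, with no equations imposed between them: caps $\mathrm{cap}_r : I \to \uparrow \otimes \downarrow$, $\mathrm{cap}_l : I \to \downarrow \otimes \uparrow$ and cups $\mathrm{cup}_r : \downarrow \otimes \uparrow \to I$, $\mathrm{cup}_l : \uparrow \otimes \downarrow \to I$. Wires labelled $\uparrow$ / $\downarrow$ are regarded as oriented (upwards/downwards), so a morphism is an oriented diagram. A knot (diagram) in $\mathbb{CC}$ is a morphism $I \to I$ whose string diagram has a single connected component. The turning numbers of the generators are $t(\mathrm{cap}_r) = +1$, $t(\mathrm{cap}_l) = -1$, $t(\mathrm{cup}_r) = -1$, $t(\mathrm{cup}_l) = +1$. A cap-cup cycle is a finite sequence of elements of $\{\mathrm{cap}_l, \mathrm{cap}_r, \mathrm{cup}_l, \mathrm{cup}_r\}$, considered up to cyclic permutation, in which caps and cups alternate; its turning number $T(c)$ is the sum of the turning numbers of its elements. For a knot $f \in \mathbb{CC}$, its cap-cup cycle $\mathrm{ccc}(f)$ is obtained by starting at any point of the strand, following the strand in the direction given by its orientation, and recording the caps and cups encountered until returning to the start. *)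

From mathcomp Require Import all_boot all_order all_algebra.
Set Implicit Arguments. Unset Strict Implicit. Unset Printing Implicit Defensive.
Import GRing.Theory.

(* Objects of CC: words in the two generating objects (up / down). *)
Inductive ori := Up | Down.
Definition ori_eqb (a b : ori) : bool :=
  match a, b with Up, Up | Down, Down => true | _, _ => false end.

Inductive gen := cap_r | cap_l | cup_r | cup_l.

Definition is_cap (g : gen) : bool :=
  match g with cap_r | cap_l => true | _ => false end.

Definition gdom (g : gen) : seq ori :=
  match g with cup_r => [:: Down; Up] | cup_l => [:: Up; Down] | _ => [::] end.
Definition gcod (g : gen) : seq ori :=
  match g with cap_r => [:: Up; Down] | cap_l => [:: Down; Up] | _ => [::] end.

Definition tn (g : gen) : int :=
  match g with cap_r => 1 | cap_l => -1 | cup_r => -1 | cup_l => 1 end.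

(* String diagrams of the free strict braided monoidal category CC, written as a
   vertical composite (bottom to top) of layers  id_u (x) b (x) id_v,  where b is
   a generator, a braiding, or an inverse braiding; k = size u is the offset. *)
Inductive layer :=
  | LGen of nat & gen
  | LBraid of nat
  | LBraidInv of nat.

Definition diagram := seq layer.

Definition is_crossing (l : layer) : bool :=
  match l with LGen _ _ => false | _ => true end.
Definition crossing_free (f : diagram) : bool := ~~ has is_crossing f.

(* A leg of a generator occurrence: (index of its layer in f, false = left / true = right). *)
Definition leg := (nat * bool)%type.
(* A wire at some height: its orientation and the leg of the cap that created it. *)
Definition wire := (ori * leg)%type.
(* A link records that a wire joins two legs (the creating cap leg and the
   consuming cup leg). *)
Definition link := (leg * leg)%type.

Definition step (i : nat) (l : layer) (st : seq wire * seq link)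
  : option (seq wire * seq link) :=
  let (w, ls) := st in
  match l with
  | LGen k g =>
      if is_cap g then
        if k <= size w then
          Some (take k w ++ [seq (o, (i, j == 1%N)) | '(o, j) <- zip (gcod g) (iota 0 2)]
                ++ drop k w, ls)
        else None
      else
        match drop k w, gdom g with
        | (a, la) :: (b, lb) :: rest, [:: a'; b'] =>
            if ori_eqb a a' && ori_eqb b b' then
              Some (take k w ++ rest, (la, (i, false)) :: (lb, (i, true)) :: ls)
            else None
        | _, _ => None
        end
  | LBraid k | LBraidInv k =>
      match drop k w with
      | x :: y :: rest => Some (take k w ++ y :: x :: rest, ls)
      | _ => None
      end
  end.

Fixpoint run (i : nat) (f : diagram) (st : seq wire * seq link)
  : option (seq wire * seq link) :=
  match f with
  | [::] => Some st
  | l :: f' => match step i l st with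
               | Some st' => run i.+1 f' st'
               | None => None
               end
  end.

Definition endo_I (f : diagram) : bool :=
  match run 0 f ([::], [::]) with Some ([::], _) => true | _ => false end.

Definition links (f : diagram) : seq link :=
  match run 0 f ([::], [::]) with Some (_, ls) => ls | None => [::] end.

Definition leg_eqb (a b : leg) : bool := (a.1 == b.1) && (a.2 == b.2).

Definition partner (f : diagram) (a : leg) : leg :=
  let ls := links f in
  match [seq p <- ls | leg_eqb p.1 a || leg_eqb p.2 a] with
  | p :: _ => if leg_eqb p.1 a then p.2 else p.1
  | [::] => a
  end.

Definition is_gen_layer (l : layer) : bool := ~~ is_crossing l.
Definition gen_at (f : diagram) (i : nat) : gen :=
  match nth (LBraid 0) f i with LGen _ g => g | _ => cap_r end.

(* the leg through which the oriented strand leaves a generator *)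
Definition out_leg (g : gen) : bool :=
  match g with cap_r => false | cap_l => true | cup_r => false | cup_l => true end.

Definition next_gen (f : diagram) (i : nat) : nat :=
  (partner f (i, out_leg (gen_at f i))).1.

Definition ngens (f : diagram) : nat := count is_gen_layer f.
Definition first_gen (f : diagram) : nat := find is_gen_layer f.

Definition strand (f : diagram) : seq nat :=
  traject (next_gen f) (first_gen f) (ngens f).

(* a knot diagram: a morphism I -> I whose string diagram is connected
   (the strand through one generator visits all generators) and nonempty *)
Definition is_knot (f : diagram) : Prop :=
  [/\ endo_I f, 0 < ngens f & uniq (strand f)].

(* the cap-cup cycle of a knot (a representative, up to rotation) *)
Definition ccc (f : diagram) : seq gen := map (gen_at f) (strand f).

Definition is_ccycle (c : seq gen) : Prop :=
  forall i, i < size c ->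
    is_cap (nth cap_r c i) != is_cap (nth cap_r c (i.+1 %% size c)).

Definition turning (c : seq gen) : int := \sum_(g <- c) tn g.

Definition cyc_eq (c d : seq gen) : Prop := exists k, c = rot k d.

From mathcomp Require Import all_boot all_order all_algebra.
From mathcomp Require Import zify.
Set Implicit Arguments. Unset Strict Implicit. Unset Printing Implicit Defensive.
Import GRing.Theory.

(* If no two cyclically adjacent
   entries of c have opposite turning numbers, all entries have the same one,
   and T(c) = ±2 forces c to be one cap and one cup: a circle.  Otherwise, up
   to rotation, c = d ++ [a; b] with a, b a cap and a cup of opposite turning
   numbers, and T(d) = T(c).  By alternation, the strand of a crossing-free
   knot realizing d (which exists by induction) starts with a cap if b is a
   cup, and ends with a cap if b is a cap.  Inserting a zigzag, i.e. a new cap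
   and cup, on the wire entering that first cap, resp. leaving that last cap,
   adds no crossing and splices exactly a and b into the strand between its
   last and first generators. *)

Lemma all_take_drop T (a : pred T) k s : all a s = all a (take k s) && all a (drop k s).
Proof. by rewrite -all_cat cat_take_drop. Qed.

Lemma run_cat i f1 f2 st :
  run i (f1 ++ f2) st =
  match run i f1 st with Some st' => run (i + size f1) f2 st' | None => None end.
Proof.
elim: f1 i st => [|l f1 IH] i st /=; first by rewrite addn0.
by case: (step i l st) => [st'|//]; rewrite IH addSnnS.
Qed.

Definition add_links (ls : seq link) (o : option (seq wire * seq link)) :=
  if o is Some (w, ls') then Some (w, ls' ++ ls) else None.

Lemma step_add_links i l w ls1 ls :
  step i l (w, ls1 ++ ls) = add_links ls (step i l (w, ls1)).
Proof.
case: l => [k g|k|k] /=; [|by case: (drop k w) => [|x [|y r]]..].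
case: (is_cap g); first by case: ifP.
case: (drop k w) => [|[a la] [|[b lb] rest]] //.
by case: (gdom g) => [|a' [|b' [|]]] //; case: ifP.
Qed.

Local Arguments step : simpl never.

Lemma run_add_links i f w ls1 ls :
  run i f (w, ls1 ++ ls) = add_links ls (run i f (w, ls1)).
Proof.
elim: f i w ls1 => [|l f IH] i w ls1 //=.
by rewrite step_add_links; case: (step i l (w, ls1)) => [[w' ls']|] //=; rewrite IH.
Qed.

Definition relabel_wires (r : leg -> leg) (w : seq wire) : seq wire :=
  [seq (x.1, r x.2) | x <- w].
Definition relabel_links (r : leg -> leg) (ls : seq link) : seq link :=
  [seq (r x.1, r x.2) | x <- ls].
Definition relabel r (o : option (seq wire * seq link)) :=
  if o is Some (w, ls) then Some (relabel_wires r w, relabel_links r ls) else None.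

Lemma step_relabel r d i l w ls :
  (forall b, r (i, b) = (i + d, b)) ->
  step (i + d) l (relabel_wires r w, relabel_links r ls) = relabel r (step i l (w, ls)).
Proof.
move=> ri; rewrite /step /relabel_wires.
case: l => [k [] | k | k] /=; rewrite -?map_drop ?size_map.
all: try by case: ifP => //= _; rewrite /relabel_wires !map_cat map_take /= !ri.
all: case: (drop k w) => [|[a la] [|[b lb] rest]] //=; try case: ifP => //= _.
all: by rewrite /relabel_wires map_cat map_take ?ri.
Qed.

Lemma run_relabel r d f i w ls :
  (forall n b, i <= n -> r (n, b) = (n + d, b)) ->
  run (i + d) f (relabel_wires r w, relabel_links r ls) = relabel r (run i f (w, ls)).
Proof.
elim: f i w ls => [|l f IH] i w ls ri //=.
rewrite step_relabel; last by move=> b; apply: ri.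
case: (step i l (w, ls)) => [[w' ls']|] //=.
by rewrite -addSn IH // => n b /ltnW; apply: ri.
Qed.

Definition labels_below i (st : seq wire * seq link) :=
  all (fun x : wire => x.2.1 < i) st.1 &&
  all (fun p : link => (p.1.1 < i) && (p.2.1 < i)) st.2.

Lemma labels_below_mono i j st : i <= j -> labels_below i st -> labels_below j st.
Proof.
move=> ij /andP[Hw Hl]; apply/andP; split.
- by apply: sub_all Hw => x /leq_trans; apply.
- by apply: sub_all Hl => x /andP[a b]; apply/andP; split; exact: leq_trans ij.
Qed.

Lemma step_labels_below i l st st' :
  labels_below i st -> step i l st = Some st' -> labels_below i.+1 st'.
Proof.
case: st => w ls /(labels_below_mono (leqnSn i)) /andP[/= Hw Hl].
rewrite /step; case: l => [k g|k|k]; move: Hw; rewrite (all_take_drop _ k) => /andP[Ht Hd].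
2,3: case: (drop k w) Hd => [|x [|y w']] //= /and3P[Hx Hy Hr] [<-];
     by apply/andP; split => //=; rewrite all_cat Ht /= Hx Hy Hr.
case: (is_cap g).
- case: ifP => // _ [<-]; apply/andP; split => //=.
  by rewrite !all_cat Ht Hd /= !andbT; case: g => /=; rewrite ?ltnSn.
- case: (drop k w) Hd => [|[a la] [|[b lb] rest]] //= /and3P[Ha Hb Hr].
  case: (gdom g) => [|a' [|b' [|]]] //; case: ifP => // _ [<-].
  by apply/andP; split => /=; rewrite ?all_cat ?Ht ?Hr // Ha Hb Hl ltnSn.
Qed.

Lemma run_labels_below i f st st' :
  labels_below i st -> run i f st = Some st' -> labels_below (i + size f) st'.
Proof.
elim: f i st => [|l f IH] i st /=; first by rewrite addn0 => H [<-].
case E: (step i l st) => [st1|] // H; rewrite addnS -addSn.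
by apply: IH; exact: step_labels_below E.
Qed.

Definition touches (a : leg) (p : link) := leg_eqb p.1 a || leg_eqb p.2 a.

Definition link_partner (ls : seq link) (a : leg) : leg :=
  if [seq p <- ls | touches a p] is p :: _ then (if leg_eqb p.1 a then p.2 else p.1)
  else a.

Lemma partner_links f a : partner f a = link_partner (links f) a.
Proof. by []. Qed.

Lemma leg_eqbE (a b : leg) : leg_eqb a b = (a == b).
Proof. by case: a b => [? ?] [? ?]; rewrite xpair_eqE. Qed.

Lemma link_partner_relabel r ls a : injective r ->
  link_partner (relabel_links r ls) (r a) = r (link_partner ls a).
Proof.
move=> r_inj; rewrite /link_partner /relabel_links filter_map.
rewrite (@eq_filter _ (preim _ (touches (r a))) (touches a)); last first.
  by move=> p /=; rewrite /touches !leg_eqbE !(inj_eq r_inj).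
case: [seq p <- ls | _] => [|p q] //=.
by rewrite !leg_eqbE (inj_eq r_inj); case: ifP.
Qed.

Lemma link_partner_skip A E B x : ~~ has (touches x) E ->
  link_partner (A ++ E ++ B) x = link_partner (A ++ B) x.
Proof. by rewrite has_filter negbK => /eqP E0; rewrite /link_partner !filter_cat E0. Qed.

Lemma link_partner_hit A E B x : ~~ has (touches x) A -> has (touches x) E ->
  link_partner (A ++ E ++ B) x = link_partner E x.
Proof.
rewrite !has_filter negbK => /eqP A0.
by rewrite /link_partner !filter_cat A0; case: [seq p <- E | _].
Qed.

Lemma has_touches_relabel r ls x : (forall a, r a != x) ->
  ~~ has (touches x) (relabel_links r ls).
Proof.
move=> rx; rewrite has_map; apply/hasPn => p _.
by rewrite /= /touches !leg_eqbE !(negbTE (rx _)).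
Qed.

Lemma relabel_links_id_in r ls :
  (forall p, p \in ls -> r p.1 = p.1 /\ r p.2 = p.2) -> relabel_links r ls = ls.
Proof. by move=> H; apply: map_id_in => -[a b] /H /= [-> ->]. Qed.

Lemma relabel_wires_id r (w : seq wire) :
  all (fun x : wire => r x.2 == x.2) w -> relabel_wires r w = w.
Proof. by elim: w => //= [[o x] w IH] /andP[/eqP /= -> /IH ->]. Qed.

Definition shift j n := if n <= j then n else n.+2.

Lemma shift_inj j : injective (shift j).
Proof. by move=> x y; rewrite /shift; case: ifP; case: ifP; lia. Qed.

Lemma shift_neq1 j n : shift j n != j.+1.
Proof. by rewrite /shift; case: ifP; lia. Qed.

Lemma shift_neq2 j n : shift j n != j.+2.
Proof. by rewrite /shift; case: ifP; lia. Qed.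

Lemma shift_eq j n : shift j n = j -> n = j.
Proof. by rewrite /shift; case: ifP; lia. Qed.

Lemma shift_id j : shift j j = j.
Proof. by rewrite /shift leqnn. Qed.

Lemma shift_lt j n m : n < m -> shift j n < m.+2.
Proof. by rewrite /shift; case: ifP; lia. Qed.

(* Relabelling of legs when two layers are inserted right after layer [j]
   and the wire leaving leg [l] of layer [j] is rerouted to leg [t] of the
   new layer [j.+1]. *)
Definition reroute j (l : leg) (t : bool) (a : leg) : leg :=
  if a == l then (j.+1, t) else (shift j a.1, a.2).

Section Reroute.
Variables (j : nat) (l : leg) (t : bool).
Hypothesis l_at_j : l.1 = j.

Lemma reroute_leg : reroute j l t l = (j.+1, t).
Proof. by rewrite /reroute eqxx. Qed.

Lemma reroute_other a : a != l -> reroute j l t a = (shift j a.1, a.2).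
Proof. by rewrite /reroute => /negbTE ->. Qed.

Lemma reroute_inj : injective (reroute j l t).
Proof.
move=> a b; rewrite /reroute.
case: eqP => [->|na]; case: eqP => [->|nb] //.
- by case=> E _; have := shift_neq1 j b.1; rewrite -E eqxx.
- by case=> E _; have := shift_neq1 j a.1; rewrite E eqxx.
- by case: a b {na nb} => [a1 a2] [b1 b2] [/shift_inj -> ->].
Qed.

Lemma reroute_above n b : j < n -> reroute j l t (n, b) = (n + 2, b).
Proof.
move=> jn; rewrite /reroute; case: eqP => [E|_].
  by move: jn; rewrite -l_at_j -E ltnn.
by rewrite /shift /= leqNgt jn addn2.
Qed.

Lemma reroute_below (x : leg) : x.1 < j -> reroute j l t x = x.
Proof.
move=> hx; rewrite reroute_other; last by apply/eqP => E; move: hx; rewrite E l_at_j ltnn.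
by rewrite /shift leq_eqVlt hx orbT; case: x {hx}.
Qed.

Lemma reroute_neq_leg a : reroute j l t a != l.
Proof.
rewrite /reroute; case: (a =P l) => [_|na]; apply/eqP => E.
  by move: l_at_j; rewrite -E /=; lia.
case: a na E => a1 a2 na /= E; apply: na.
by move: l_at_j; rewrite <- E => /= /shift_eq ->; rewrite shift_id.
Qed.

Lemma reroute_neq1 a : reroute j l t a != (j.+1, ~~ t).
Proof.
rewrite /reroute; case: (a =P l) => _; rewrite xpair_eqE; first by rewrite eqxx; case: (t).
by rewrite (negbTE (shift_neq1 _ _)).
Qed.

Lemma reroute_neq2 a b : reroute j l t a != (j.+2, b).
Proof.
rewrite /reroute; case: (a =P l) => _; rewrite xpair_eqE; first by apply/nandP; left; lia.
by rewrite (negbTE (shift_neq2 _ _)).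
Qed.

End Reroute.

(* A zigzag on a wire of orientation [o] at position [p]: a new cap placed
   beside the wire, on the side given by [t], and a cup joining the wire to
   the near leg of that cap.  The far leg [t] of the cap carries the wire on,
   so the zigzag adds no crossing. *)
Definition zigzag_cap (o : ori) (t : bool) : gen :=
  match o, t with Down, true | Up, false => cap_r | _, _ => cap_l end.
Definition zigzag_cup (o : ori) (t : bool) : gen :=
  match o, t with Down, true | Up, false => cup_r | _, _ => cup_l end.
Definition zigzag (o : ori) (t : bool) (p : nat) : seq layer :=
  [:: LGen (p + t) (zigzag_cap o t); LGen (p + ~~ t) (zigzag_cup o t)].

Definition zigzag_links j (l : leg) (t : bool) : seq link :=
  if t then [:: (l, (j.+2, false)); ((j.+1, false), (j.+2, true))]
  else [:: ((j.+1, true), (j.+2, false)); (l, (j.+2, true))].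

Lemma out_leg_zigzag_cap o t : out_leg (zigzag_cap o t) = if o is Down then ~~ t else t.
Proof. by case: o; case: t. Qed.

Lemma out_leg_zigzag_cup o t : out_leg (zigzag_cup o t) = if o is Down then ~~ t else t.
Proof. by case: o; case: t. Qed.

Lemma run_zigzag j o t (w1 w2 : seq wire) x (B : seq link) :
  run j.+1 (zigzag o t (size w1)) (w1 ++ (o, x) :: w2, B) =
  Some (w1 ++ (o, (j.+1, t)) :: w2, zigzag_links j x t ++ B).
Proof.
have take1 (y : wire) w : take (size w1).+1 (w1 ++ y :: w) = w1 ++ [:: y].
  by rewrite -cat_rcons take_size_cat ?size_rcons ?cats1.
have drop1 (y : wire) w : drop (size w1).+1 (w1 ++ y :: w) = w.
  by rewrite -cat_rcons drop_size_cat ?size_rcons.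
have size1 (y : wire) w : (size w1).+1 <= size (w1 ++ y :: w).
  by rewrite size_cat /= addnS ltnS leq_addr.
have size0 w : size w1 <= size (w1 ++ w) by rewrite size_cat leq_addr.
have take0 w : take (size w1) (w1 ++ w) = w1 by rewrite take_size_cat.
have drop0 w : drop (size w1) (w1 ++ w) = w by rewrite drop_size_cat.
rewrite /zigzag; case: o; case: t; rewrite /= ?addn1 ?addn0 /step /=.
all: first [ by rewrite size1 take1 drop1 -catA /= drop0 take0
            | by rewrite size0 take0 drop0 /= drop1 take1 -catA ].
Qed.

Section ZigzagLinks.
Variables (j : nat) (s t : bool).
Let l : leg := (j, s).

Lemma has_touches_zigzag_reroute a : ~~ has (touches (reroute j l t a)) (zigzag_links j l t).
Proof.
have h1 := @reroute_neq_leg j l t erefl a; have h2 := @reroute_neq1 j l t a.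
have h3 := @reroute_neq2 j l t erefl a false; have h4 := @reroute_neq2 j l t erefl a true.
rewrite /touches /zigzag_links; case: (t) in h1 h2 h3 h4 *;
  by rewrite /= !leg_eqbE !(eq_sym _ (reroute _ _ _ a)) (negbTE h1) (negbTE h2)
             (negbTE h3) (negbTE h4).
Qed.

Ltac zigzag_compute :=
  rewrite /link_partner /touches /zigzag_links /= /leg_eqb /=;
  do 4 (rewrite ?eqxx ?(ltn_eqF (ltnSn _)) ?(gtn_eqF (ltnSn _))
                ?(ltn_eqF (leqnSn _)) ?(gtn_eqF (leqnSn _)) /=).

Lemma zigzag_links_cap : link_partner (zigzag_links j l t) (j.+1, ~~ t) = (j.+2, t)
  /\ has (touches (j.+1, ~~ t)) (zigzag_links j l t).
Proof. by case: (t); case: (s); zigzag_compute. Qed.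

Lemma zigzag_links_cup b :
  link_partner (zigzag_links j l t) (j.+2, b) = (if b == t then (j.+1, ~~ t) else l)
  /\ has (touches (j.+2, b)) (zigzag_links j l t).
Proof. by case: (t); case: (s); case: b; zigzag_compute. Qed.

Lemma zigzag_links_leg : link_partner (zigzag_links j l t) l = (j.+2, ~~ t)
  /\ has (touches l) (zigzag_links j l t).
Proof. by case: (t); case: (s); zigzag_compute. Qed.

End ZigzagLinks.

Definition insert_after (f : diagram) j (z : seq layer) := take j.+1 f ++ z ++ drop j.+1 f.

Section InsertAfter.
Variables (f : diagram) (j : nat).
Hypothesis j_lt : j < size f.

Lemma size_insert_after L1 L2 : size (insert_after f j [:: L1; L2]) = (size f).+2.
Proof. by rewrite /insert_after !size_cat (size_takel j_lt) size_drop /=; lia. Qed.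

Lemma gen_at_insert_after_shift L1 L2 x :
  gen_at (insert_after f j [:: L1; L2]) (shift j x) = gen_at f x.
Proof.
rewrite /gen_at /insert_after /shift; case: (leqP x j) => hx;
  rewrite nth_cat (size_takel j_lt); first by rewrite ltnS hx nth_take.
rewrite ltnNge ltnW /=; last by lia.
by rewrite (_ : x.+2 - j.+1 = (x - j.+1).+2) /= ?nth_drop ?subnKC //; lia.
Qed.

Lemma gen_at_insert_after1 p g L2 : gen_at (insert_after f j [:: LGen p g; L2]) j.+1 = g.
Proof. by rewrite /gen_at /insert_after nth_cat (size_takel j_lt) ltnn subnn. Qed.

Lemma gen_at_insert_after2 L1 p g : gen_at (insert_after f j [:: L1; LGen p g]) j.+2 = g.
Proof.
rewrite /gen_at /insert_after nth_cat (size_takel j_lt).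
by rewrite ltnNge leqnSn /= subSnn.
Qed.

Lemma all_gen_insert_after z : all is_gen_layer f -> all is_gen_layer z ->
  all is_gen_layer (insert_after f j z).
Proof.
rewrite /insert_after (all_take_drop _ j.+1) => /andP[ft fd] hz.
by rewrite !all_cat ft fd hz.
Qed.

End InsertAfter.

Definition strand_step (f : diagram) (x y : nat) : bool :=
  partner f (x, out_leg (gen_at f x)) == (y, ~~ out_leg (gen_at f y)).

(* [s] lists every layer once, in strand order; [0 \in s] lets it be rotated
   to start at the first generator, where [strand f] starts. *)
Definition strand_cycle (f : diagram) (s : seq nat) : bool :=
  [&& uniq s, size s == size f, 0 \in s, all (fun x => x < size f) s
    & cycle (strand_step f) s].

Definition realizes (f : diagram) (c : seq gen) : Prop :=
  [/\ all is_gen_layer f, endo_I f & exists2 s, strand_cycle f s & map (gen_at f) s = c].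

Lemma path_traject f x p :
  path (strand_step f) x p -> x :: p = traject (next_gen f) x (size p).+1.
Proof. by elim: p x => [|y p IH] x //= /andP[/eqP sxy /IH ->]; rewrite /next_gen sxy. Qed.

Lemma realizes_knot f c : realizes f c ->
  [/\ is_knot f, crossing_free f & cyc_eq c (ccc f)].
Proof.
case=> f_gen f_endo [s /and5P[s_uniq /eqP s_size s0 s_lt s_cycle] <-].
have f_pos : 0 < size f by rewrite -s_size; case: (s) s0.
have first0 : first_gen f = 0.
  by case: f f_gen f_pos {s_size s_lt s_cycle f_endo} => //= l f' /andP[-> _].
have ngens_size : ngens f = size f by apply/eqP; rewrite -all_count.
case/rot_to: s0 => i s' Es.
have strandE : strand f = 0 :: s'.
  have : cycle (strand_step f) (0 :: s') by rewrite -Es rot_cycle.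
  rewrite /strand first0 ngens_size -s_size -(size_rot i) Es /= rcons_path => /andP[p _].
  by rewrite (path_traject p).
split.
- by split; rewrite ?ngens_size // strandE -Es rot_uniq.
- by rewrite /crossing_free -all_predC; apply: sub_all f_gen.
- exists (size s - i); rewrite /ccc strandE -Es map_rot.
  by rewrite -[in LHS](rotK i (map _ s)) /rotr size_rot size_map.
Qed.

Lemma realizes_rot f c k : realizes f c -> realizes f (rot k c).
Proof.
case=> f_gen f_endo [s /and5P[s_uniq s_size s0 s_lt s_cycle] <-].
split=> //; exists (rot k s); last by rewrite map_rot.
have s_perm : perm_eq (rot k s) s by rewrite perm_rot.
by rewrite /strand_cycle rot_uniq size_rot mem_rot (perm_all _ s_perm) rot_cycle; apply/and5P.
Qed.

Lemma sub_path_belast (T : eqType) (e e' : rel T) x p :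
  (forall a b, a \in belast x p -> b \in p -> e a b -> e' a b) -> path e x p -> path e' x p.
Proof.
elim: p x => [|y p IH] x //= ee' /andP[exy pp].
rewrite ee' ?mem_head //=; apply: IH pp => a b ha hb; apply: ee'.
  by rewrite inE ha orbT.
by rewrite inE hb orbT.
Qed.

Lemma out_leg_neq_in_leg f x y : (x, out_leg (gen_at f x)) != (y, ~~ out_leg (gen_at f y)).
Proof. by apply/eqP => -[<-]; case: (out_leg _). Qed.

Section StrandInsert.
Variables (f : diagram) (j : nat) (L1 L2 : layer) (l : leg) (t : bool).
Let f' := insert_after f j [:: L1; L2].
Hypothesis j_lt : j < size f.
Hypothesis l_at_j : l.1 = j.
Hypothesis partner_reroute : forall a, partner f' (reroute j l t a) = reroute j l t (partner f a).

Lemma strand_step_reroute x y : strand_step f x y ->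
  (x, out_leg (gen_at f x)) != l -> (y, ~~ out_leg (gen_at f y)) != l ->
  strand_step f' (shift j x) (shift j y).
Proof.
move=> /eqP sxy xl yl; rewrite /strand_step !gen_at_insert_after_shift //.
by rewrite -(reroute_other j t xl) partner_reroute sxy (reroute_other j t yl).
Qed.

(* The rerouted leg [l] must be an end of the wire from the last to the first
   generator of [s]: that wire is the one the new generators are spliced into. *)
Lemma strand_cycle_insert v rest e1 e2 :
  let u := last v rest in
  strand_cycle f (v :: rest) ->
  l = (v, ~~ out_leg (gen_at f v)) \/ l = (u, out_leg (gen_at f u)) ->
  [:: e1; e2] = [:: j.+1; j.+2] \/ [:: e1; e2] = [:: j.+2; j.+1] ->
  [&& strand_step f' (shift j u) e1, strand_step f' e1 e2 & strand_step f' e2 (shift j v)] ->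
  strand_cycle f' (map (shift j) (v :: rest) ++ [:: e1; e2]).
Proof.
move=> u /and5P[s_uniq /eqP s_size s0 s_lt s_cycle] l_wrap e12 /and3P[s_ue1 s_e12 s_e2v].
have e12_new : [/\ e1 \notin map (shift j) (v :: rest), e2 \notin map (shift j) (v :: rest),
                   e1 != e2, e1 < (size f).+2 & e2 < (size f).+2].
  have not_shift n : n \in [:: j.+1; j.+2] -> n \notin map (shift j) (v :: rest).
    move=> hn; apply/mapP => -[m _ En]; move: hn; rewrite En !inE.
    by rewrite (negbTE (shift_neq1 _ _)) (negbTE (shift_neq2 _ _)).
  by case: e12 => -[-> ->]; rewrite !not_shift ?inE ?eqxx ?orbT //=; split=> //; lia.
case: e12_new => e1_new e2_new e1e2 e1_lt e2_lt.
apply/and5P; split.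
- rewrite cat_uniq (map_inj_uniq (@shift_inj j)) s_uniq /= mem_seq1 e1e2 orbF negb_or.
  by rewrite !andbT; apply/andP; split; [exact: e1_new | exact: e2_new].
- by rewrite size_cat size_map s_size size_insert_after // addn2.
- by rewrite mem_cat (_ : 0 = shift j 0) // (map_f (shift j) s0).
- rewrite all_cat all_map size_insert_after //= e1_lt e2_lt !andbT.
  by apply: sub_all s_lt => z /= /shift_lt.
move: s_cycle; rewrite /= rcons_path => /andP[s_path _].
rewrite rcons_cat cat_path last_map path_map /= s_ue1 s_e12 s_e2v !andbT.
apply: sub_path_belast s_path => a b a_in b_in sab; apply: strand_step_reroute => //.
- case: l_wrap => ->; first exact: out_leg_neq_in_leg.
  apply/eqP => -[au _]; move: s_uniq; rewrite lastI rcons_uniq -/u -au.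
  by rewrite a_in.
- case: l_wrap => ->; last by rewrite eq_sym out_leg_neq_in_leg.
  by apply/eqP => -[bv _]; move: s_uniq; rewrite /= -bv b_in.
Qed.

End StrandInsert.

Lemma cap_in_leg g : is_cap g -> nth Up (gcod g) (~~ out_leg g) = Down.
Proof. by case: g. Qed.

Lemma cap_out_leg g : is_cap g -> nth Up (gcod g) (out_leg g) = Up.
Proof. by case: g. Qed.

Section InsertZigzag.
Variables (f : diagram) (j k : nat) (g : gen) (s t : bool).
Hypothesis f_endo : endo_I f.
Hypothesis j_lt : j < size f.
Hypothesis layer_j : nth (LBraid 0) f j = LGen k g.
Hypothesis cap_g : is_cap g.
Let l : leg := (j, s).
Let layer_gen : gen_at f j = g. Proof. by rewrite /gen_at layer_j. Qed.
Let o := nth Up (gcod g) s.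
Let r := reroute j l t.
Let f' := insert_after f j (zigzag o t (k + s)).

Lemma cap_wires_split w0 : all (fun x : wire => x.2.1 < j) w0 -> k <= size w0 ->
  exists w1 w2,
  [/\ take k w0 ++ [seq (a, (j, i == 1)) | '(a, i) <- zip (gcod g) (iota 0 2)] ++ drop k w0
        = w1 ++ (o, l) :: w2,
      size w1 = k + s & all (fun x : wire => r x.2 == x.2) (w1 ++ w2)].
Proof.
move=> w0_below kw.
have fix_w0 : all (fun x : wire => r x.2 == x.2) w0.
  by apply: sub_all w0_below => x /= hx; rewrite /r reroute_below.
have fix_j b : (r (j, b) == (j, b)) = (b != s).
  rewrite /r /reroute /l; case: (b =P s) => [->|ns].
    by rewrite eqxx xpair_eqE (gtn_eqF (ltnSn j)).
  by rewrite xpair_eqE eqxx /= (introF eqP ns) /shift leqnn eqxx; apply/esym/eqP.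
have size_take_k : size (take k w0) = k by rewrite size_take_min; apply/minn_idPl.
move: fix_w0; rewrite (all_take_drop _ k) => /andP[ft fd].
move: cap_g fix_j; rewrite /o /l; case: (g) => // _; case: (s) => /= fix_j.
- exists (take k w0 ++ [:: (Up, (j, false))]), (drop k w0).
  by rewrite -catA size_cat size_take_k addn1 !all_cat /= ft fd fix_j.
- exists (take k w0), ((Down, (j, true)) :: drop k w0).
  by rewrite size_take_k addn0 !all_cat /= ft fd fix_j.
- exists (take k w0 ++ [:: (Down, (j, false))]), (drop k w0).
  by rewrite -catA size_cat size_take_k addn1 !all_cat /= ft fd fix_j.
- exists (take k w0), ((Up, (j, true)) :: drop k w0).
  by rewrite size_take_k addn0 !all_cat /= ft fd fix_j.
Qed.

(* [T] are the links made above layer [j], [B] those made below it. *)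
Lemma run_insert_zigzag : exists T B,
  [/\ links f = T ++ B, relabel_links r B = B &
      run 0 f' ([::], [::]) = Some ([::], relabel_links r T ++ zigzag_links j l t ++ B)].
Proof.
have Ef : f = take j f ++ LGen k g :: drop j.+1 f.
  by rewrite -layer_j -drop_nth ?cat_take_drop.
have Etk : take j.+1 f = take j f ++ [:: LGen k g].
  by rewrite (take_nth (LBraid 0) j_lt) layer_j cats1.
have sz0 : size (take j f) = j by rewrite size_take j_lt.
move: f_endo; rewrite /endo_I /links /f'.
case Erf: (run 0 f _) => [[[|//] Lf]|//] _.
move: Erf; rewrite {1}Ef run_cat sz0 add0n.
case Er0: (run 0 (take j f) _) => [[w0 B0]|] //.
have /andP[/= w0_below B0_below] : labels_below j (w0, B0).
  by have := run_labels_below (isT : labels_below 0 ([::], [::])) Er0; rewrite sz0.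
rewrite /= /step cap_g; case: ifP => // kw.
have [w1 [w2 [Ew sz1 fix12]]] := cap_wires_split w0_below kw.
rewrite Ew -[B0]cat0s run_add_links.
case Rt: (run j.+1 _ (_, [::])) => [[wt T]|] //= [Ewt ELf]; subst wt Lf.
have fixB0 : relabel_links r B0 = B0.
  apply: relabel_links_id_in => p /(allP B0_below) /andP[h1 h2].
  by rewrite /r !reroute_below.
have Ew' : w1 ++ (o, (j.+1, t)) :: w2 = relabel_wires r (w1 ++ (o, l) :: w2).
  move: fix12; rewrite all_cat => /andP[/relabel_wires_id f1 /relabel_wires_id f2].
  by rewrite /relabel_wires map_cat /= -/(relabel_wires r w1) -/(relabel_wires r w2) f1 f2
             /r reroute_leg.
exists T, B0; split=> //.
have Rj : run j [:: LGen k g] (w0, B0) = Some (w1 ++ (o, l) :: w2, B0).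
  by rewrite /= /step cap_g kw Ew.
rewrite /insert_after run_cat Etk run_cat Er0 sz0 add0n Rj size_cat sz0 addn1.
rewrite run_cat -sz1 run_zigzag sz1 Ew' -[zigzag_links j l t ++ B0]cat0s run_add_links.
rewrite (_ : [::] = relabel_links r [::]) // run_relabel; last first.
  by move=> n b hn; rewrite /r reroute_above.
by rewrite Rt /= catA.
Qed.

Lemma insert_zigzag_endo : endo_I f'.
Proof. by have [T [B [_ _ Rf']]] := run_insert_zigzag; rewrite /endo_I Rf'. Qed.

Lemma partner_insert_zigzag_reroute a : partner f' (r a) = r (partner f a).
Proof.
have [T [B [Lf fixB Rf']]] := run_insert_zigzag.
rewrite !partner_links /links Rf' -/(links f) Lf link_partner_skip; last first.
  exact: has_touches_zigzag_reroute.
by rewrite -{1}fixB -map_cat link_partner_relabel //; apply: reroute_inj.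
Qed.

Lemma partner_insert_zigzag_new x : (forall a, r a != x) -> has (touches x) (zigzag_links j l t) ->
  partner f' x = link_partner (zigzag_links j l t) x.
Proof.
have [T [B [_ _ Rf']]] := run_insert_zigzag.
by move=> rx hx; rewrite partner_links /links Rf' link_partner_hit // has_touches_relabel.
Qed.

Lemma partner_insert_zigzag_cap : partner f' (j.+1, ~~ t) = (j.+2, t).
Proof.
have [E hx] := zigzag_links_cap j s t.
by rewrite partner_insert_zigzag_new // => a; apply: reroute_neq1.
Qed.

Lemma partner_insert_zigzag_cup b :
  partner f' (j.+2, b) = if b == t then (j.+1, ~~ t) else l.
Proof.
have [E hx] := zigzag_links_cup j s t b.
by rewrite partner_insert_zigzag_new // => a; apply: reroute_neq2.
Qed.

Lemma partner_insert_zigzag_cup_near : partner f' (j.+2, t) = (j.+1, ~~ t).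
Proof. by rewrite partner_insert_zigzag_cup eqxx. Qed.

Lemma partner_insert_zigzag_cup_far : partner f' (j.+2, ~~ t) = l.
Proof. by rewrite partner_insert_zigzag_cup; case: (t). Qed.

Lemma partner_insert_zigzag_leg : partner f' l = (j.+2, ~~ t).
Proof.
have [E hx] := zigzag_links_leg j s t.
by rewrite partner_insert_zigzag_new // => a; apply: reroute_neq_leg.
Qed.

Lemma gen_at_insert_zigzag_shift x : gen_at f' (shift j x) = gen_at f x.
Proof. exact: gen_at_insert_after_shift. Qed.

Lemma gen_at_insert_zigzag_cap : gen_at f' j.+1 = zigzag_cap o t.
Proof. exact: gen_at_insert_after1. Qed.

Lemma gen_at_insert_zigzag_cup : gen_at f' j.+2 = zigzag_cup o t.
Proof. exact: gen_at_insert_after2. Qed.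

Lemma gen_at_insert_zigzag_j : gen_at f' j = g.
Proof. by rewrite -{1}(shift_id j) gen_at_insert_zigzag_shift. Qed.

Lemma strand_cycle_zigzag_before rest : s = ~~ out_leg g ->
  strand_cycle f (j :: rest) ->
  strand_cycle f' (map (shift j) (j :: rest) ++ [:: j.+1; j.+2]).
Proof.
move=> s_in s_strand.
have [out_cap out_cup] : out_leg (zigzag_cap o t) = ~~ t /\ out_leg (zigzag_cup o t) = ~~ t.
  by rewrite out_leg_zigzag_cap out_leg_zigzag_cup /o s_in cap_in_leg.
have l_in : l = (j, ~~ out_leg (gen_at f j)) by rewrite layer_gen -s_in.
set u := last j rest.
have wrap : partner f (u, out_leg (gen_at f u)) = l.
  move: s_strand => /and5P[_ _ _ _]; rewrite /= rcons_path => /andP[_ /eqP ->].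
  by rewrite l_in.
apply: (strand_cycle_insert j_lt (erefl : l.1 = j) partner_insert_zigzag_reroute s_strand);
  [by left | by left |].
rewrite /strand_step shift_id gen_at_insert_zigzag_shift gen_at_insert_zigzag_j
  gen_at_insert_zigzag_cap gen_at_insert_zigzag_cup out_cap out_cup negbK.
rewrite -(reroute_other j t (_ : (u, _) != l)); last by rewrite l_in out_leg_neq_in_leg.
rewrite partner_insert_zigzag_reroute wrap /r reroute_leg partner_insert_zigzag_cap.
by rewrite partner_insert_zigzag_cup_far l_in layer_gen !eqxx.
Qed.

Lemma strand_cycle_zigzag_after v rest : s = out_leg g -> last v rest = j ->
  strand_cycle f (v :: rest) ->
  strand_cycle f' (map (shift j) (v :: rest) ++ [:: j.+2; j.+1]).
Proof.
move=> s_out u_j s_strand.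
have [out_cap out_cup] : out_leg (zigzag_cap o t) = t /\ out_leg (zigzag_cup o t) = t.
  by rewrite out_leg_zigzag_cap out_leg_zigzag_cup /o s_out cap_out_leg.
have l_out : l = (last v rest, out_leg (gen_at f (last v rest))).
  by rewrite u_j layer_gen -s_out.
have wrap : partner f l = (v, ~~ out_leg (gen_at f v)).
  move: s_strand => /and5P[_ _ _ _]; rewrite /= rcons_path => /andP[_ /eqP <-].
  by rewrite l_out.
apply: (strand_cycle_insert j_lt (erefl : l.1 = j) partner_insert_zigzag_reroute s_strand);
  [by right | by right |].
rewrite /strand_step u_j shift_id gen_at_insert_zigzag_shift gen_at_insert_zigzag_j
  gen_at_insert_zigzag_cap gen_at_insert_zigzag_cup out_cap out_cup -s_out.
rewrite partner_insert_zigzag_leg partner_insert_zigzag_cup_near -(reroute_leg j l t).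
rewrite partner_insert_zigzag_reroute wrap /r reroute_other ?eqxx //.
by rewrite l_out eq_sym out_leg_neq_in_leg.
Qed.

End InsertZigzag.

Lemma nth_gen_layer f x : all is_gen_layer f -> x < size f ->
  exists k, nth (LBraid 0) f x = LGen k (gen_at f x).
Proof.
move=> f_gen hx; have := all_nthP (LBraid 0) f_gen x hx.
by rewrite /gen_at; case: (nth (LBraid 0) f x) => // k g _; exists k.
Qed.

Lemma realizes_zigzag_before_cap f c t : realizes f c -> is_cap (head cup_r c) ->
  exists f', realizes f' (c ++ [:: zigzag_cap Down t; zigzag_cup Down t]).
Proof.
case=> f_gen f_endo [[|v rest] s_strand <-]; first by case/and5P: s_strand.
rewrite [head _ _]/= => cap_v.
have v_lt : v < size f by case/and5P: s_strand => _ _ _ /andP[].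
have [k layer_v] := nth_gen_layer f_gen v_lt.
rewrite -(cap_in_leg cap_v).
exists (insert_after f v (zigzag (nth Up (gcod (gen_at f v)) (~~ out_leg (gen_at f v))) t
                          (k + ~~ out_leg (gen_at f v)))).
split; first by apply: all_gen_insert_after.
- exact: insert_zigzag_endo.
exists (map (shift v) (v :: rest) ++ [:: v.+1; v.+2]).
  exact: strand_cycle_zigzag_before.
rewrite map_cat -map_comp (eq_map (gen_at_insert_zigzag_shift _ _ _ _ v_lt)) /=.
by rewrite (gen_at_insert_zigzag_cap _ _ _ _ v_lt) (gen_at_insert_zigzag_cup _ _ _ _ v_lt).
Qed.

Lemma realizes_zigzag_after_cap f c t : realizes f c -> is_cap (last cup_r c) ->
  exists f', realizes f' (c ++ [:: zigzag_cup Up t; zigzag_cap Up t]).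
Proof.
case=> f_gen f_endo [[|v rest] s_strand <-]; first by case/and5P: s_strand.
rewrite [last _ _]/= last_map; set u := last v rest => cap_u.
have u_lt : u < size f.
  by case/and5P: s_strand => _ _ _ /allP s_lt _; apply: s_lt; exact: mem_last.
have [k layer_u] := nth_gen_layer f_gen u_lt.
rewrite -(cap_out_leg cap_u).
exists (insert_after f u (zigzag (nth Up (gcod (gen_at f u)) (out_leg (gen_at f u))) t
                          (k + out_leg (gen_at f u)))).
split; first by apply: all_gen_insert_after.
- exact: insert_zigzag_endo.
exists (map (shift u) (v :: rest) ++ [:: u.+2; u.+1]).
  exact: strand_cycle_zigzag_after.
rewrite map_cat -map_comp (eq_map (gen_at_insert_zigzag_shift _ _ _ _ u_lt)) /=.
by rewrite (gen_at_insert_zigzag_cap _ _ _ _ u_lt) (gen_at_insert_zigzag_cup _ _ _ _ u_lt).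
Qed.

Definition alternating (x y : gen) := is_cap x != is_cap y.

Lemma ccycle_alternating c : is_ccycle c -> cycle alternating c.
Proof.
case: c => [//|x c] cc; rewrite (cycle_path x); apply/(pathP x) => -[|i] hi /=.
  have := cc (size c) (ltnSn _).
  by rewrite /= modnn /alternating (last_nth x) (set_nth_default cap_r x).
have := cc i (ltnW hi); rewrite modn_small //= /alternating.
by rewrite (set_nth_default cap_r x (ltnW hi)) (set_nth_default cap_r x (hi : i < size c)).
Qed.

Lemma realizes_cat_opposite_pair f d a b : realizes f d ->
  cycle alternating (d ++ [:: a; b]) -> (tn a + tn b = 0)%R ->
  exists f', realizes f' (d ++ [:: a; b]).
Proof.
move=> fd; have [x [d' Ed]] : exists x d', d = x :: d'.
  case: fd => _ _ [[|x s] s_strand <-]; first by case/and5P: s_strand.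
  by exists (gen_at f x), (map (gen_at f) s).
rewrite Ed /= rcons_cat cat_path /= /alternating => /andP[_ /and3P[alt_la alt_ab alt_bx]].
have before t := realizes_zigzag_before_cap t fd.
have after t := realizes_zigzag_after_cap t fd.
rewrite Ed /= in before after.
case: a b alt_la alt_ab alt_bx => -[] //= alt_la _ alt_bx tn0; try by [].
- by apply: (before true); move: alt_bx; case: (is_cap x).
- by apply: (before false); move: alt_bx; case: (is_cap x).
- by apply: (after false); move: alt_la; case: (is_cap (last x d')).
- by apply: (after true); move: alt_la; case: (is_cap (last x d')).
Qed.

Lemma turning_cat c1 c2 : turning (c1 ++ c2) = (turning c1 + turning c2)%R.
Proof. by rewrite /turning big_cat. Qed.

Lemma turning_rot k c : turning (rot k c) = turning c.
Proof. by rewrite /rot turning_cat addrC -turning_cat cat_take_drop. Qed.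

Lemma turning_pair a b : turning [:: a; b] = (tn a + tn b)%R.
Proof. by rewrite /turning !big_cons big_nil addr0. Qed.

Lemma turning_const c z : all (fun x => tn x == z) c -> turning c = (z *+ size c)%R.
Proof.
elim: c => [|x c IH] /=; first by rewrite /turning big_nil.
by case/andP=> /eqP tx /IH tc; rewrite /turning big_cons -/(turning c) tc tx mulrS.
Qed.

Lemma adjacent_opposite_or_constant c :
  (exists l1 l2 a b, c = l1 ++ a :: b :: l2 /\ (tn a + tn b = 0)%R)
  \/ all (fun x => tn x == tn (head cap_r c)) c.
Proof.
elim: c => [|x c [[l1 [l2 [a [b [-> ab]]]]]|IH]]; first by right.
  by left; exists (x :: l1), l2, a, b.
case: c IH => [|y c] IH; first by right; rewrite /= eqxx.
have [xy|xy] := eqVneq (tn x + tn y)%R 0; first by left; exists [::], c, x, y.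
by right; rewrite /= eqxx (_ : tn x = tn y) //; move: xy; case: (x); case: (y).
Qed.

Lemma cycle_alternating_drop_pair d a b : 0 < size d ->
  cycle alternating (d ++ [:: a; b]) -> cycle alternating d.
Proof.
case: d => [//|x d] _; rewrite /= rcons_cat cat_path /= rcons_path /alternating.
case/andP=> -> /and4P[] /=.
by case: (is_cap (last x d)); case: (is_cap a); case: (is_cap b); case: (is_cap x).
Qed.

Lemma realizes_circle c : size c = 2 -> cycle alternating c ->
  all (fun x => tn x == tn (head cap_r c)) c -> exists f, realizes f c.
Proof.
case: c => [|a [|b [|]]] //= _; case: a; case: b => //= _ _.
- by exists [:: LGen 0 cap_r; LGen 0 cup_l]; split=> //; exists [:: 0; 1]; vm_compute.
- by exists [:: LGen 0 cap_l; LGen 0 cup_r]; split=> //; exists [:: 0; 1]; vm_compute.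
- by exists [:: LGen 0 cap_l; LGen 0 cup_r]; split=> //; exists [:: 1; 0]; vm_compute.
- by exists [:: LGen 0 cap_r; LGen 0 cup_l]; split=> //; exists [:: 1; 0]; vm_compute.
Qed.

Lemma realizes_turning2 c : cycle alternating c ->
  (turning c = 2%R \/ turning c = (-2)%R) -> exists f, realizes f c.
Proof.
elim: {c}(size c) {-2}c (leqnn (size c)) => [|n IH] c c_size c_alt c_turn.
  by case: c c_size c_alt c_turn => // _ _; rewrite /turning big_nil; case.
have [[l1 [l2 [a [b [Ec ab]]]]] | c_const] := adjacent_opposite_or_constant c.
  set d := l2 ++ l1.
  have rot_c : rot (size (l1 ++ [:: a; b])) c = d ++ [:: a; b].
    by rewrite Ec (_ : a :: b :: l2 = [:: a; b] ++ l2) // catA rot_size_cat /d catA.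
  have dab_alt : cycle alternating (d ++ [:: a; b]) by rewrite -rot_c rot_cycle.
  have d_turn : turning d = turning c.
    by rewrite -(turning_rot (size (l1 ++ [:: a; b])) c) rot_c turning_cat turning_pair ab
               addr0.
  have d_pos : 0 < size d.
    by case: (d) d_turn => // /esym c0; move: c_turn; rewrite c0 /turning big_nil; case.
  have [f fd] : exists f, realizes f d.
    apply: IH; last by rewrite d_turn.
      by move: c_size; rewrite Ec /d !size_cat /=; lia.
    exact: cycle_alternating_drop_pair d_pos dab_alt.
  have [f' f'dab] := realizes_cat_opposite_pair fd dab_alt ab.
  by exists f'; rewrite -(rotK (size (l1 ++ [:: a; b])) c) rot_c; apply: realizes_rot.
apply: realizes_circle => //; move: c_turn; rewrite (turning_const c_const).
case: c c_const {IH c_size c_alt} => [|h c] _ /=; first by rewrite mulr0n; case.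
by case: h => /=; rewrite ?mulNrn natz; lia.
Qed.

Theorem mainTheorem3 (c : seq gen) :
  is_ccycle c -> (turning c = 2%R \/ turning c = (-2)%R) ->
  exists f : diagram, [/\ is_knot f, crossing_free f & cyc_eq c (ccc f)].
Proof.
move=> c_cycle c_turn.
have [f fc] := realizes_turning2 (ccycle_alternating c_cycle) c_turn.
by exists f; apply: realizes_knot.
Qed.
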